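(* For every Hilbert space $H$ with $\dim H\ge2$, there exist an infinite semigroup $G$ with unit which is not left-cancellative, a contractive representation $\mathcal S=(S(g))_{g\in G}$ of $G$ on $H$, a representation $\mathcal T=(T(g))_{g\in G}$ of $G$ on $H$, and operators $A,B\in\mathcal L(H)$ such that $$\sum_{g\in G}\|T(g)-AS(g)B\|^2<\infty,$$ but $\mathcal T$ is not similar to a contractive representation of $G$ (i.e. there is no invertible $R\in\mathcal L(H)$ with $\|R^{-1}T(g)R\|\le1$ for all $g\in G$).
   Context: A semigroup $(G,\cdot)$ is left-cancellative if $f\cdot a=f\cdot b$ implies $a=b$ for all $f,a,b\in G$. A representation of a unital semigroup $G$ on $H$ is a map $g\mapsto T(g)\in\mathcal L(H)$ with $T(gh)=T(g)T(h)$ and $T(e)=I$; it is contractive if all $T(g)$ are contractions. *)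

From mathcomp Require Import all_boot all_algebra.
From mathcomp Require Import complex.
From mathcomp Require Import all_classical all_reals ereal esum.
Import GRing.Theory Num.Theory.
Local Open Scope ring_scope.
Local Open Scope classical_set_scope.

Set Implicit Arguments.
Unset Strict Implicit.
Unset Printing Implicit Defensive.

Section Hilbert.
Variable R : realType.
Variable V : lmodType R[i].
Variable ip : V -> V -> R[i].  (* inner product, linear in the first slot *)

Definition hnorm (x : V) : R := Num.sqrt (complex.Re (ip x x)).

Definition is_hilbert : Prop :=
  [/\ (forall (a : R[i]) (x y z : V), ip (a *: x + y) z = a * ip x z + ip y z),
      (forall x y : V, ip y x = (ip x y)^*),
      (forall x : V, 0 <= ip x x),
      (forall x : V, ip x x = 0 -> x = 0) &
      (forall u : nat -> V,
         (forall eps : R, 0 < eps -> exists N : nat, forall m n : nat,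
             (N <= m)%N -> (N <= n)%N -> hnorm (u m - u n) < eps) ->
         exists l : V, forall eps : R, 0 < eps -> exists N : nat,
             forall n : nat, (N <= n)%N -> hnorm (u n - l) < eps)].

Definition dim_ge2 : Prop :=
  exists x y : V, forall a b : R[i], a *: x + b *: y = 0 -> a = 0 /\ b = 0.

Definition bounded_op (f : V -> V) : Prop :=
  (forall (a : R[i]) (x y : V), f (a *: x + y) = a *: f x + f y) /\
  (exists M : R, forall x : V, hnorm (f x) <= M * hnorm x).

Definition opnorm (f : V -> V) : R :=
  sup [set r : R | exists x : V, hnorm x <= 1 /\ r = hnorm (f x)].

Definition invertible_op (R0 Ri : V -> V) : Prop :=
  [/\ bounded_op R0, bounded_op Ri,
      (forall x, R0 (Ri x) = x) & (forall x, Ri (R0 x) = x)].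

Definition representation (G : Type) (op : G -> G -> G) (e : G)
  (T : G -> V -> V) : Prop :=
  [/\ forall g, bounded_op (T g),
      forall g h x, T (op g h) x = T g (T h x) &
      forall x, T e x = x].

Definition contractive (G : Type) (T : G -> V -> V) : Prop :=
  forall g, opnorm (T g) <= 1.

Definition similar_to_contractive (G : Type) (T : G -> V -> V) : Prop :=
  exists R0 Ri : V -> V, invertible_op R0 Ri /\
    forall g, opnorm (fun x => Ri (T g (R0 x))) <= 1.

End Hilbert.

Definition unital_semigroup (G : Type) (op : G -> G -> G) (e : G) : Prop :=
  [/\ forall a b c, op a (op b c) = op (op a b) c,
      forall a, op e a = a & forall a, op a e = a].

Definition left_cancellative (G : Type) (op : G -> G -> G) : Prop :=
  forall f a b, op f a = op f b -> a = b.

(** The semigroup is [nat] with unit [0] and [g * h = g] for [g <> 0].  Fix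
    nonzero orthogonal vectors [a] and [w].  For [g <> 0] let [T g] be the
    idempotent [x |-> <x,a>/<a,a> b_g] with range [span b_g] and kernel [a^⊥],
    where [b_1 = a + w] and [b_g = a] for [g >= 2]; together with [T 0 = 1]
    this is a representation, and with [S = 1], [A] the orthogonal projection
    onto [span a] and [B = 1], only the terms [g = 0, 1] of the series are
    nonzero.  A contractive idempotent is an orthogonal projection: if
    [Ri (T g) R0] were contractive then [Ri b_g] would minimize the norm on the
    line [Ri b_g + t Ri w], hence [<Ri b_g, Ri w> = 0].  Doing this for [g = 1]
    and [g = 2] and subtracting gives [Ri w = 0], hence [w = 0]. *)

From mathcomp Require Import all_boot all_algebra.
From mathcomp Require Import complex.
From mathcomp Require Import all_classical all_reals ereal esum.
From mathcomp Require Import order ring lra.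
Import Order.TTheory GRing.Theory Num.Theory.
Local Open Scope ring_scope.
Local Open Scope classical_set_scope.

Definition left_zero_mul (g h : nat) : nat := if g == 0%N then h else g.

Lemma left_zero_mul_unital : unital_semigroup left_zero_mul 0%N.
Proof. by split=> [[|g] h k | g | [|g]]. Qed.

Lemma left_zero_mul_not_left_cancellative : ~ left_cancellative left_zero_mul.
Proof. by move=> /(_ 1%N 1%N 2%N erefl). Qed.

Lemma esum_finite_support_lty {R : realType} {T : choiceType} {F : set T}
    (f : T -> R) :
  finite_set F -> (forall i, 0 <= f i) -> (forall i, ~ F i -> f i = 0) ->
  (\esum_(i in [set: T]) (f i)%:E < +oo)%E.
Proof.
move=> finF f_ge0 f_out.
rewrite (esumID F) => [|i _]; last by rewrite lee_fin.
rewrite [X in (_ + X)%E]esum1 => [|i [_ notFi]]; last by rewrite f_out.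
rewrite adde0 setTI esum_fset // => [|i _]; last by rewrite lee_fin.
by rewrite fsumEFin // ltry.
Qed.

Section Complex.
Context {R : rcfType}.

Lemma RRe_ge0 {z : R[i]} : 0 <= z -> ((complex.Re z)%:C)%C = z.
Proof. by move=> /ger0_real /RRe_real. Qed.

Lemma Re_ge0 {z : R[i]} : 0 <= z -> 0 <= complex.Re z.
Proof. by move=> z_ge0; rewrite -ler0c RRe_ge0. Qed.

Lemma ler_Re {z y : R[i]} : z <= y -> complex.Re z <= complex.Re y.
Proof. by rewrite lecE => /andP[]. Qed.

End Complex.

Section Linear.
Context {K : pzRingType} {U W : lmodType K} {f : U -> W}.
Hypothesis f_lin : linear f.

Lemma linear_fun0 : f 0 = 0.
Proof.
have := f_lin 1 0 0; rewrite !scale1r addr0 => f00.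
by apply: (addrI (f 0)); rewrite -f00 addr0.
Qed.

Lemma linear_funD x y : f (x + y) = f x + f y.
Proof. by rewrite -[x]scale1r f_lin !scale1r. Qed.

Lemma linear_funZ a x : f (a *: x) = a *: f x.
Proof. by rewrite -[a *: x]addr0 f_lin linear_fun0 addr0. Qed.

End Linear.

Section InnerProductSpace.
Context {R : realType} {V : lmodType R[i]} {ip : V -> V -> R[i]}.
Hypothesis ipH : is_hilbert ip.

Lemma ip_linear z : linear (ip ^~ z : V -> R[i]^o).
Proof. by case: ipH => ipDZl _ _ _ _ a x y; apply: ipDZl. Qed.

Lemma ipC x y : ip y x = (ip x y)^*.
Proof. by case: ipH => _ ipC _ _ _; apply: ipC. Qed.

Lemma ip_ge0 x : 0 <= ip x x.
Proof. by case: ipH => _ _ ip_ge0 _ _; apply: ip_ge0. Qed.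

Lemma ip_eq0 x : ip x x = 0 -> x = 0.
Proof. by case: ipH => _ _ _ ip_eq0 _; apply: ip_eq0. Qed.

Lemma ip0l z : ip 0 z = 0.
Proof. exact: (linear_fun0 (ip_linear z)). Qed.

Lemma ipDl x y z : ip (x + y) z = ip x z + ip y z.
Proof. exact: (linear_funD (ip_linear z)). Qed.

Lemma ipZl a x z : ip (a *: x) z = a * ip x z.
Proof. exact: (linear_funZ (ip_linear z)). Qed.

Lemma ipBl x y z : ip (x - y) z = ip x z - ip y z.
Proof. by rewrite ipDl -scaleN1r ipZl mulN1r. Qed.

Lemma ipDr x y z : ip z (x + y) = ip z x + ip z y.
Proof. by rewrite ipC ipDl rmorphD /= -!ipC. Qed.

Lemma ipZr a x z : ip z (a *: x) = a^* * ip z x.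
Proof. by rewrite ipC ipZl rmorphM /= -!ipC. Qed.

Lemma ipD_orth x y : ip x y = 0 -> ip (x + y) (x + y) = ip x x + ip y y.
Proof. by move=> xy; rewrite ipDl !ipDr (ipC x y) xy conjC0 addr0 add0r. Qed.

Lemma hnorm_ge0 x : 0 <= hnorm ip x.
Proof. exact: sqrtr_ge0. Qed.

Lemma ler_hnorm x y : (hnorm ip x <= hnorm ip y) = (ip x x <= ip y y).
Proof.
rewrite /hnorm ler_sqrt; last exact/Re_ge0/ip_ge0.
by rewrite -[in RHS](RRe_ge0 (ip_ge0 x)) -[in RHS](RRe_ge0 (ip_ge0 y)) lecR.
Qed.

Lemma hnorm0 : hnorm ip 0 = 0.
Proof. by rewrite /hnorm ip0l sqrtr0. Qed.

Lemma hnorm_eq0 x : hnorm ip x = 0 -> x = 0.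
Proof.
move=> /eqP; rewrite sqrtr_eq0 => Re_le0; apply: ip_eq0.
rewrite -(RRe_ge0 (ip_ge0 x)).
suff -> : complex.Re (ip x x) = 0 by [].
by apply/eqP; rewrite eq_le Re_le0 Re_ge0 // ip_ge0.
Qed.

Lemma hnormZ (r : R) x : 0 <= r -> hnorm ip ((r%:C)%C *: x) = r * hnorm ip x.
Proof.
move=> r_ge0; rewrite /hnorm ipZl ipZr conj_Creal ?complex_real //.
rewrite mulrA -(RRe_ge0 (ip_ge0 x)) -rmorphM /= mulr0 subr0.
by rewrite sqrtrM ?mulr_ge0 // -expr2 sqrtr_sqr ger0_norm.
Qed.

(** With [t = - s <x,y>] and [s = 1 / (<y,y> + 1)], the squared norm changes
    by [s (s <y,y> - 2) |<x,y>|^2], a negative multiple of [|<x,y>|^2]. *)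
Lemma hnorm_min_ortho x y :
  (forall t, hnorm ip x <= hnorm ip (x + t *: y)) -> ip x y = 0.
Proof.
move=> x_min; set k := ip x y; pose q := complex.Re (ip y y).
have q_ge0 : 0 <= q := Re_ge0 (ip_ge0 y).
pose s := (q + 1)^-1.
have s_gt0 : 0 < s by rewrite invr_gt0; lra.
have sq_le1 : s * q <= 1 by rewrite mulrC ler_pdivrMr; lra.
pose m := k * k^*; have m_ge0 : 0 <= m := mul_conjC_ge0 k.
pose mr := complex.Re m.
have := x_min (- ((s%:C)%C * k)); rewrite ler_hnorm.
have -> : ip (x + (- ((s%:C)%C * k)) *: y) (x + (- ((s%:C)%C * k)) *: y) =
          ip x x + ((s * (s * q - 2) * mr)%:C)%C.
  rewrite ipDl !ipDr !ipZl !ipZr (ipC x y) -/k -(RRe_ge0 (ip_ge0 y)) -/q.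
  rewrite rmorphN rmorphM /= conj_Creal ?complex_real //.
  have -> : ((s * (s * q - 2) * mr)%:C)%C =
            (s%:C)%C * ((s%:C)%C * (q%:C)%C - 2%:R) * m.
    by rewrite -[in RHS](RRe_ge0 m_ge0) -/mr !(rmorphM, rmorphB) /= rmorph_nat.
  by rewrite /m; ring.
rewrite lerDl ler0c => coef_ge0.
have coef_lt0 : s * (s * q - 2) < 0 by rewrite pmulr_rlt0 //; lra.
have mr_ge0 : 0 <= mr := Re_ge0 m_ge0.
have mr0 : mr = 0 by nra.
have /eqP : m = 0 by rewrite -(RRe_ge0 m_ge0) -/mr mr0.
by rewrite mulf_eq0 conjC_eq0 orbb => /eqP.
Qed.

Lemma bounded_op_ge0 {f : V -> V} : bounded_op ip f ->
  exists2 M, 0 <= M & forall x, hnorm ip (f x) <= M * hnorm ip x.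
Proof.
case=> _ [M f_le]; exists (Num.max M 0) => [|x].
  by rewrite le_max lexx orbT.
apply: le_trans (f_le x) _; apply: ler_wpM2r; first exact: hnorm_ge0.
by rewrite le_max lexx.
Qed.

Lemma bounded_op_ip f (K : R[i]) : linear f -> 0 <= K ->
  (forall x, ip (f x) (f x) <= ip x x * K) -> bounded_op ip f.
Proof.
move=> f_lin K_ge0 f_le; split=> //; exists (Num.sqrt (complex.Re K)) => x.
rewrite /hnorm mulrC -sqrtrM; last exact/Re_ge0/ip_ge0.
rewrite ler_sqrt; last by rewrite mulr_ge0 ?Re_ge0 ?ip_ge0.
apply: le_trans (ler_Re (f_le x)) _.
rewrite -[in X in complex.Re X](RRe_ge0 (ip_ge0 x)).
by rewrite -[in X in complex.Re X](RRe_ge0 K_ge0) /= mulr0 subr0.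
Qed.

Lemma bounded_op_id : bounded_op ip id.
Proof. by apply: (@bounded_op_ip _ 1) => // x; rewrite mulr1. Qed.

Lemma bounded_op_comp f g : bounded_op ip f -> bounded_op ip g ->
  bounded_op ip (fun x => f (g x)).
Proof.
move=> fB [g_lin [Mg g_le]]; have [Mf Mf_ge0 f_le] := bounded_op_ge0 fB.
split=> [a x y|]; first by rewrite g_lin fB.1.
exists (Mf * Mg) => x; apply: le_trans (f_le _) _.
by rewrite -mulrA ler_wpM2l.
Qed.

Lemma opnorm_le1_contraction f : bounded_op ip f -> opnorm ip f <= 1 ->
  forall x, hnorm ip (f x) <= hnorm ip x.
Proof.
move=> fB f_le1; have [M M_ge0 f_le] := bounded_op_ge0 fB.
have ball_le1 x : hnorm ip x <= 1 -> hnorm ip (f x) <= 1.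
  move=> x_le1; apply: le_trans f_le1; apply: sup_upper_bound; last by exists x.
  split; first by exists (hnorm ip (f 0)), 0; rewrite hnorm0 ler01.
  exists M => _ [y [y_le1 ->]]; apply: le_trans (f_le y) _.
  by rewrite -[leRHS]mulr1 ler_wpM2l.
move=> x; have [/hnorm_eq0 ->|x_neq0] := eqVneq (hnorm ip x) 0.
  by rewrite (linear_fun0 fB.1) hnorm0.
have x_gt0 : 0 < hnorm ip x by rewrite lt_def x_neq0 hnorm_ge0.
pose r := (hnorm ip x)^-1; have r_ge0 : 0 <= r by rewrite invr_ge0 hnorm_ge0.
have := ball_le1 ((r%:C)%C *: x).
rewrite (linear_funZ fB.1) !hnormZ // mulVf // lexx => /(_ isT) rfx_le1.
by rewrite /r mulrC ler_pdivrMr // mul1r in rfx_le1.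
Qed.

Lemma opnorm_id_le1 : opnorm ip id <= 1.
Proof.
by apply: ge_sup => [|_ [x [x_le1 ->]]] //; exists 0, 0; rewrite hnorm0.
Qed.

Lemma opnorm0 : opnorm ip (fun=> 0) = 0.
Proof.
rewrite /opnorm (_ : [set r | _] = [set 0]) ?sup1 //.
apply/seteqP; split=> [_ [x [_ ->]]|_ ->]; first by rewrite hnorm0.
by exists 0; rewrite hnorm0 ler01.
Qed.

Lemma representation_id (G : Type) (op : G -> G -> G) (e : G) :
  representation ip op e (fun=> id).
Proof. by split=> // g; apply: bounded_op_id. Qed.

Lemma dim_ge2_orth_pair : dim_ge2 V ->
  exists a w : V, [/\ ip a a != 0, ip w a = 0 & w != 0].
Proof.
case=> [u [v uv_free]].
have u_neq0 : u != 0.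
  apply/eqP=> u0; have := uv_free 1 0; rewrite u0 scaler0 scale0r addr0.
  by case=> // /eqP; rewrite oner_eq0.
have uu_neq0 : ip u u != 0 by apply: contra u_neq0 => /eqP/ip_eq0 ->.
pose c := ip v u / ip u u.
exists u, (v - c *: u); split=> //; first by rewrite ipBl ipZl divfK // subrr.
apply/eqP=> /eqP; rewrite subr_eq0 => /eqP v_eq.
have := uv_free (- c) 1; rewrite scale1r scaleNr -v_eq addNr.
by case=> // _ /eqP; rewrite oner_eq0.
Qed.

Definition rank_one (a b x : V) : V := (ip x a / ip a a) *: b.

Lemma rank_one_linear a b : linear (rank_one a b).
Proof.
by move=> c x y; rewrite /rank_one ipDl ipZl mulrDl scalerDl scalerA mulrA.
Qed.

Lemma rank_oneK a b b' x : ip a a != 0 -> ip b' a = ip a a ->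
  rank_one a b (rank_one a b' x) = rank_one a b x.
Proof. by move=> a_neq0 b'a; rewrite /rank_one ipZl b'a divfK. Qed.

Lemma rank_one_fix a b z : ip a a != 0 -> ip b a = ip a a -> ip z a = 0 ->
  rank_one a b (b + z) = b.
Proof.
by move=> a_neq0 ba za; rewrite /rank_one ipDl za addr0 ba divff ?scale1r.
Qed.

Lemma ip_rank_one_le a x : ip a a != 0 ->
  ip (rank_one a a x) (rank_one a a x) <= ip x x.
Proof.
move=> a_neq0; rewrite /rank_one; set c := ip x a / ip a a.
have orth : ip (c *: a) (x - c *: a) = 0.
  by rewrite ipZl ipC ipBl ipZl divfK // subrr conjC0 mulr0.
rewrite [in leRHS](_ : x = c *: a + (x - c *: a)); last by rewrite addrC subrK.
by rewrite ipD_orth // lerDl ip_ge0.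
Qed.

Lemma bounded_op_rank_one a b : ip a a != 0 -> ip b a = ip a a ->
  bounded_op ip (rank_one a b).
Proof.
move=> a_neq0 ba; apply: (@bounded_op_ip _ (ip b b / ip a a)).
- exact: rank_one_linear.
- by rewrite divr_ge0 ?ip_ge0.
move=> x; have := ip_rank_one_le a x a_neq0; rewrite /rank_one !ipZl !ipZr.
set c := ip x a / ip a a => cx_le.
have -> : c * (c^* * ip b b) = c * (c^* * ip a a) * (ip b b / ip a a) by field.
by rewrite ler_wpM2r ?divr_ge0 ?ip_ge0.
Qed.

Definition rank_one_rep (a : V) (b : nat -> V) (g : nat) : V -> V :=
  if g == 0%N then id else rank_one a (b g).

Lemma rank_one_rep_representation a b : ip a a != 0 ->
  (forall g, ip (b g) a = ip a a) ->
  representation ip left_zero_mul 0%N (rank_one_rep a b).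
Proof.
move=> a_neq0 ba; split=> [[|g]|[|g] [|h] x|] //=.
- exact: bounded_op_id.
- exact: bounded_op_rank_one.
- by rewrite /rank_one_rep /left_zero_mul /= rank_oneK.
Qed.

Lemma similar_contractive_rank_one_orth {R0 Ri a b} z :
  invertible_op ip R0 Ri -> opnorm ip (fun x => Ri (rank_one a b (R0 x))) <= 1 ->
  ip a a != 0 -> ip b a = ip a a -> ip z a = 0 -> ip (Ri b) (Ri z) = 0.
Proof.
case=> R0B RiB R0K _ RQR_le1 a_neq0 ba za; apply: hnorm_min_ortho => t.
rewrite -(linear_funZ RiB.1) -(linear_funD RiB.1).
have {1}-> : b = rank_one a b (R0 (Ri (b + t *: z))).
  by rewrite R0K rank_one_fix // ipZl za mulr0.
apply: opnorm_le1_contraction RQR_le1 _.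
apply: bounded_op_comp RiB _; apply: bounded_op_comp R0B.
exact: bounded_op_rank_one.
Qed.

Lemma rank_one_pair_not_similar_to_contractive {G : Type} (T : G -> V -> V)
    (g1 g2 : G) (a w : V) :
  ip a a != 0 -> ip w a = 0 -> w != 0 ->
  T g1 = rank_one a (a + w) -> T g2 = rank_one a a ->
  ~ similar_to_contractive ip T.
Proof.
move=> a_neq0 wa w_neq0 T1 T2 [R0 [Ri [RB T_le1]]].
have [R0B RiB R0K _] := RB.
have awa : ip (a + w) a = ip a a by rewrite ipDl wa addr0.
have o1 : ip (Ri (a + w)) (Ri w) = 0.
  move: (T_le1 g1); rewrite T1.
  by move=> /(similar_contractive_rank_one_orth w RB); apply.
have o2 : ip (Ri a) (Ri w) = 0.
  move: (T_le1 g2); rewrite T2.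
  by move=> /(similar_contractive_rank_one_orth w RB); apply.
have /ip_eq0 Riw0 : ip (Ri w) (Ri w) = 0.
  by rewrite -o1 (linear_funD RiB.1) ipDl o2 add0r.
by move: w_neq0; rewrite -(R0K w) Riw0 (linear_fun0 R0B.1) eqxx.
Qed.

End InnerProductSpace.

Arguments rank_one {R V} ip a b x.
Arguments rank_one_rep {R V} ip a b g.

Theorem proposition4p6 (R : realType) (V : lmodType R[i]) (ip : V -> V -> R[i]) :
  is_hilbert ip -> dim_ge2 V ->
  exists (G : choiceType) (op : G -> G -> G) (e : G),
    [/\ unital_semigroup op e,
        infinite_set [set: G],
        ~ left_cancellative op &
    exists (S T : G -> V -> V) (A B : V -> V),
      [/\ representation ip op e S /\ contractive ip S,
          representation ip op e T, bounded_op ip A /\ bounded_op ip B,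
          (\esum_(g in [set: G])
             ((opnorm ip (fun x => T g x - A (S g (B x)))) ^+ 2)%:E < +oo)%E &
          ~ similar_to_contractive ip T]].
Proof.
move=> ipH /(dim_ge2_orth_pair ipH) [a [w [a_neq0 wa w_neq0]]].
pose b g := if g == 1%N then a + w else a.
have ba g : ip (b g) a = ip a a.
  by rewrite /b; case: ifP; rewrite ?(ipDl ipH) ?wa ?addr0.
exists nat, left_zero_mul, 0%N; split.
- exact: left_zero_mul_unital.
- exact: infinite_nat.
- exact: left_zero_mul_not_left_cancellative.
exists (fun=> id), (rank_one_rep ip a b), (rank_one ip a a), id; split.
- by split; [exact: representation_id | move=> g; exact: opnorm_id_le1].
- exact: rank_one_rep_representation.
- by split; [exact: bounded_op_rank_one | exact: bounded_op_id].
- apply: (esum_finite_support_lty _ (finite_II 2)) => [g|[|[|g]] g_ge2].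
  + exact: sqr_ge0.
  + by case: g_ge2.
  + by case: g_ge2.
  have -> : (fun x => rank_one_rep ip a b g.+2 x - rank_one ip a a (id x)) =
            fun=> 0.
    by apply: funext => x; rewrite subrr.
  by rewrite (opnorm0 ipH) expr0n.
- exact: (rank_one_pair_not_similar_to_contractive ipH _ 1%N 2%N _ _
           a_neq0 wa w_neq0 erefl erefl).
Qed.
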